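(* Let $T$ be a commutative monad on a category $\mathcal{A}$ with finite products, with $\mathrm{Alg}(T)$ symmetric monoidal $(\otimes, I=T(1))$ and the free functor strong monoidal via $\xi\colon T(X)\otimes T(Y)\cong T(X\times Y)$. For every $\overline{T}$-coalgebra (basis) $b$ on an algebra $a\colon TX\to X$, the maps $d_b=(a\otimes a)\circ\xi^{-1}\circ T(\Delta)\circ b$ and $u_b=T(!)\circ b$ are homomorphisms of $\overline{T}$-coalgebras, so that $(d_b,u_b)$ is a comonoid in $\mathrm{CoAlg}(\overline{T})$. Consequently $\mathrm{CoAlg}(\overline{T})$ has finite products (given by the tensor $\otimes$ of carrier algebras, with final object the coalgebra $T(\eta_1)$ on $T(1)$), and the functor $\mathcal{A}\to\mathrm{CoAlg}(\overline{T})$, $Y\mapsto(T(Y),\mu_Y,T(\eta_Y))$, preserves finite products.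
   Context: $\mathrm{Alg}(T)$: Eilenberg–Moore algebras; $\overline{T}=FU$ the comonad on $\mathrm{Alg}(T)$ induced by the free-algebra adjunction, $\overline{T}(a)=\mu_X$, counit $a$, comultiplication $T(\eta_X)$. A basis ($\overline{T}$-coalgebra) on $a\colon TX\to X$ is $b\colon X\to TX$ with $b\circ a=\mu_X\circ T(b)$, $a\circ b=\mathrm{id}_X$, $T(\eta_X)\circ b=T(b)\circ b$. $\mathrm{CoAlg}(\overline{T})$ is the category of such coalgebras with algebra maps commuting with the coalgebra structures. The coalgebra structure on a tensor $X_1\otimes X_2$ of coalgebras $b_1,b_2$ is $X_1\otimes X_2\xrightarrow{b_1\otimes b_2}T(X_1)\otimes T(X_2)\xrightarrow{\xi}T(X_1\times X_2)\xrightarrow{T(\otimes)}T(X_1\otimes X_2)$, where $\otimes\colon X_1\times X_2\to X_1\otimes X_2$ is the universal bihomomorphism. *)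

Unset Implicit Arguments.
Unset Strict Implicit.

Record CartCat := {
  ob :> Type;
  hom : ob -> ob -> Type;
  idm : forall A, hom A A;
  comp : forall {A B D : ob}, hom B D -> hom A B -> hom A D;
  comp_idl : forall A B (f : hom A B), comp (idm B) f = f;
  comp_idr : forall A B (f : hom A B), comp f (idm A) = f;
  comp_assoc : forall A B D E (f : hom A B) (g : hom B D) (h : hom D E),
      comp h (comp g f) = comp (comp h g) f;
  one : ob;
  bang : forall A, hom A one;
  bang_uniq : forall A (f : hom A one), f = bang A;
  prod : ob -> ob -> ob;
  fst : forall A B, hom (prod A B) A;
  snd : forall A B, hom (prod A B) B;
  pair : forall {Z A B : ob}, hom Z A -> hom Z B -> hom Z (prod A B);
  fst_pair : forall Z A B (f : hom Z A) (g : hom Z B), comp (fst A B) (pair f g) = f;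
  snd_pair : forall Z A B (f : hom Z A) (g : hom Z B), comp (snd A B) (pair f g) = g;
  pair_eta : forall Z A B (h : hom Z (prod A B)),
      pair (comp (fst A B) h) (comp (snd A B) h) = h
}.
Arguments hom {c}.
Arguments idm {c}.
Arguments comp {c A B D}.
Arguments one {c}.
Arguments bang {c}.
Arguments prod {c}.
Arguments fst {c}.
Arguments snd {c}.
Arguments pair {c Z A B}.

Declare Scope cat_scope.
Notation "g ∘ f" := (comp g f) (at level 40, left associativity) : cat_scope.
Notation "A × B" := (prod A B) (at level 39, left associativity) : cat_scope.
Open Scope cat_scope.

Definition pmap {C : CartCat} {A B A' B' : C} (f : hom A A') (g : hom B B')
  : hom (A × B) (A' × B') := pair (f ∘ fst A B) (g ∘ snd A B).
Definition diag {C : CartCat} (A : C) : hom A (A × A) := pair (idm A) (idm A).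
Definition swap {C : CartCat} (A B : C) : hom (A × B) (B × A) :=
  pair (snd A B) (fst A B).
Definition assocr {C : CartCat} (A B D : C) : hom ((A × B) × D) (A × (B × D)) :=
  pair (fst A B ∘ fst (A × B) D) (pair (snd A B ∘ fst (A × B) D) (snd (A × B) D)).

Record Monad (C : CartCat) := {
  T : C -> C;
  fmap : forall {A B : C}, hom A B -> hom (T A) (T B);
  fmap_id : forall A, fmap (idm A) = idm (T A);
  fmap_comp : forall A B D (f : hom A B) (g : hom B D), fmap (g ∘ f) = fmap g ∘ fmap f;
  eta : forall A, hom A (T A);
  mu : forall A, hom (T (T A)) (T A);
  eta_nat : forall A B (f : hom A B), fmap f ∘ eta A = eta B ∘ f;
  mu_nat : forall A B (f : hom A B), fmap f ∘ mu A = mu B ∘ fmap (fmap f);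
  mu_eta_T : forall A, mu A ∘ eta (T A) = idm (T A);
  mu_T_eta : forall A, mu A ∘ fmap (eta A) = idm (T A);
  mu_assoc : forall A, mu A ∘ fmap (mu A) = mu A ∘ mu (T A)
}.
Arguments T {C} m.
Arguments fmap {C} m {A B}.
Arguments eta {C} m.
Arguments mu {C} m.

Record StrongMonad (C : CartCat) := {
  smon :> Monad C;
  st : forall A B : C, hom (A × T smon B) (T smon (A × B));
  st_nat : forall A A' B B' (f : hom A A') (g : hom B B'),
      st A' B' ∘ pmap f (fmap smon g) = fmap smon (pmap f g) ∘ st A B;
  st_unit : forall B, fmap smon (snd one B) ∘ st one B = snd one (T smon B);
  st_assoc : forall A B D,
      fmap smon (assocr A B D) ∘ st (A × B) D
      = st A (B × D) ∘ pmap (idm A) (st B D) ∘ assocr A B (T smon D);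
  st_eta : forall A B, st A B ∘ pmap (idm A) (eta smon B) = eta smon (A × B);
  st_mu : forall A B, st A B ∘ pmap (idm A) (mu smon B)
                      = mu smon (A × B) ∘ fmap smon (st A B) ∘ st A (T smon B)
}.
Arguments st {C} s.


Definition cst {C} (M : StrongMonad C) (A B : C) : hom (T M A × B) (T M (A × B)) :=
  fmap M (swap B A) ∘ st M B A ∘ swap (T M A) B.
Definition dstL {C} (M : StrongMonad C) (A B : C) : hom (T M A × T M B) (T M (A × B)) :=
  mu M (A × B) ∘ fmap M (cst M A B) ∘ st M (T M A) B.
Definition dstR {C} (M : StrongMonad C) (A B : C) : hom (T M A × T M B) (T M (A × B)) :=
  mu M (A × B) ∘ fmap M (st M A B) ∘ cst M A (T M B).
Definition commutative {C} (M : StrongMonad C) : Prop :=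
  forall A B : C, dstL M A B = dstR M A B.

Definition is_alg {C} (M : Monad C) (X : C) (a : hom (T M X) X) : Prop :=
  a ∘ eta M X = idm X /\ a ∘ fmap M a = a ∘ mu M X.

Record Alg {C} (M : Monad C) := {
  acar : C;
  act : hom (T M acar) acar;
  act_law : is_alg M acar act
}.
Arguments acar {C M}.
Arguments act {C M}.

Definition is_alg_hom {C} {M : Monad C} (A B : Alg M) (f : hom (acar A) (acar B)) : Prop :=
  f ∘ act A = act B ∘ fmap M f.

Lemma free_alg_law {C} (M : Monad C) (Y : C) : is_alg M (T M Y) (mu M Y).
Proof. split; [apply mu_eta_T | apply mu_assoc]. Qed.

Definition free {C} (M : Monad C) (Y : C) : Alg M :=
  {| acar := T M Y; act := mu M Y; act_law := free_alg_law M Y |}.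

Definition is_bihom {C} (M : StrongMonad C) (A B Z : Alg M)
    (f : hom (acar A × acar B) (acar Z)) : Prop :=
  f ∘ pmap (idm (acar A)) (act B) = act Z ∘ fmap M f ∘ st M (acar A) (acar B) /\
  f ∘ pmap (act A) (idm (acar B)) = act Z ∘ fmap M f ∘ cst M (acar A) (acar B).

Record Setting (C : CartCat) := {
  M :> StrongMonad C;
  M_comm : commutative M;
  tens : Alg M -> Alg M -> Alg M;
  tb : forall A B : Alg M, hom (acar A × acar B) (acar (tens A B));
  tb_bihom : forall A B, is_bihom M A B (tens A B) (tb A B);
  tb_univ : forall (A B Z : Alg M) (f : hom (acar A × acar B) (acar Z)),
      is_bihom M A B Z f ->
      exists g : hom (acar (tens A B)) (acar Z),
        (is_alg_hom (tens A B) Z g /\ g ∘ tb A B = f) /\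
        forall g', is_alg_hom (tens A B) Z g' /\ g' ∘ tb A B = f -> g' = g;
  tmap : forall (A A' B B' : Alg M), hom (acar A) (acar A') -> hom (acar B) (acar B') ->
      hom (acar (tens A B)) (acar (tens A' B'));
  tmap_spec : forall A A' B B' (f : hom (acar A) (acar A')) (g : hom (acar B) (acar B')),
      is_alg_hom A A' f -> is_alg_hom B B' g ->
      is_alg_hom (tens A B) (tens A' B') (tmap A A' B B' f g) /\
      tmap A A' B B' f g ∘ tb A B = tb A' B' ∘ pmap f g;
  alpha : forall A B D : Alg M,
      hom (acar (tens (tens A B) D)) (acar (tens A (tens B D)));
  alpha_inv : forall A B D : Alg M,
      hom (acar (tens A (tens B D))) (acar (tens (tens A B) D));
  lam : forall A : Alg M, hom (acar (tens (free M one) A)) (acar A);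
  lam_inv : forall A : Alg M, hom (acar A) (acar (tens (free M one) A));
  rho : forall A : Alg M, hom (acar (tens A (free M one))) (acar A);
  rho_inv : forall A : Alg M, hom (acar A) (acar (tens A (free M one)));
  sigma : forall A B : Alg M, hom (acar (tens A B)) (acar (tens B A));
  alpha_hom : forall A B D, is_alg_hom _ _ (alpha A B D);
  alpha_iso : forall A B D, alpha A B D ∘ alpha_inv A B D = idm _ /\
                            alpha_inv A B D ∘ alpha A B D = idm _;
  alpha_tb : forall A B D,
      alpha A B D ∘ tb (tens A B) D ∘ pmap (tb A B) (idm (acar D))
      = tb A (tens B D) ∘ pmap (idm (acar A)) (tb B D) ∘ assocr (acar A) (acar B) (acar D);
  alpha_nat : forall A A' B B' D D' f g h,
      is_alg_hom A A' f -> is_alg_hom B B' g -> is_alg_hom D D' h ->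
      alpha A' B' D' ∘ tmap _ _ _ _ (tmap A A' B B' f g) h
      = tmap _ _ _ _ f (tmap B B' D D' g h) ∘ alpha A B D;
  lam_hom : forall A, is_alg_hom _ _ (lam A);
  lam_iso : forall A, lam A ∘ lam_inv A = idm _ /\ lam_inv A ∘ lam A = idm _;
  lam_tb : forall A, lam A ∘ tb (free M one) A
                     = act A ∘ fmap M (snd one (acar A)) ∘ cst M one (acar A);
  lam_nat : forall A A' f, is_alg_hom A A' f ->
      lam A' ∘ tmap (free M one) (free M one) A A' (idm (T M one)) f = f ∘ lam A;
  rho_hom : forall A, is_alg_hom _ _ (rho A);
  rho_iso : forall A, rho A ∘ rho_inv A = idm _ /\ rho_inv A ∘ rho A = idm _;
  rho_tb : forall A, rho A ∘ tb A (free M one)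
                     = act A ∘ fmap M (fst (acar A) one) ∘ st M (acar A) one;
  rho_nat : forall A A' f, is_alg_hom A A' f ->
      rho A' ∘ tmap A A' (free M one) (free M one) f (idm (T M one)) = f ∘ rho A;
  sigma_hom : forall A B, is_alg_hom _ _ (sigma A B);
  sigma_tb : forall A B, sigma A B ∘ tb A B = tb B A ∘ swap (acar A) (acar B);
  sigma_invol : forall A B, sigma B A ∘ sigma A B = idm _;
  sigma_nat : forall A A' B B' f g, is_alg_hom A A' f -> is_alg_hom B B' g ->
      sigma A' B' ∘ tmap A A' B B' f g = tmap B B' A A' g f ∘ sigma A B;
  pentagon : forall A B D E,
      alpha A B (tens D E) ∘ alpha (tens A B) D E
      = tmap _ _ _ _ (idm (acar A)) (alpha B D E) ∘ alpha A (tens B D) E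
        ∘ tmap _ _ _ _ (alpha A B D) (idm (acar E));
  triangle : forall A B,
      tmap _ _ _ _ (idm (acar A)) (lam B) ∘ alpha A (free M one) B
      = tmap _ _ _ _ (rho A) (idm (acar B));
  hexagon : forall A B D,
      alpha B D A ∘ sigma A (tens B D) ∘ alpha A B D
      = tmap _ _ _ _ (idm (acar B)) (sigma A D) ∘ alpha B A D
        ∘ tmap _ _ _ _ (sigma A B) (idm (acar D));
  xi : forall X Y : C, hom (acar (tens (free M X) (free M Y))) (T M (X × Y));
  xi_inv : forall X Y : C, hom (T M (X × Y)) (acar (tens (free M X) (free M Y)));
  xi_hom : forall X Y, is_alg_hom (tens (free M X) (free M Y)) (free M (X × Y)) (xi X Y);
  xi_iso : forall X Y, xi X Y ∘ xi_inv X Y = idm _ /\ xi_inv X Y ∘ xi X Y = idm _;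
  xi_tb : forall X Y, xi X Y ∘ tb (free M X) (free M Y) = dstL M X Y;
  xi_nat : forall X X' Y Y' (f : hom X X') (g : hom Y Y'),
      xi X' Y' ∘ tmap (free M X) (free M X') (free M Y) (free M Y') (fmap M f) (fmap M g) = fmap M (pmap f g) ∘ xi X Y;
  xi_assoc : forall X Y Z,
      fmap M (assocr X Y Z) ∘ xi (X × Y) Z ∘ tmap _ (free M (X × Y)) _ (free M Z) (xi X Y) (idm _)
      = xi X (Y × Z) ∘ tmap (free M X) (free M X) _ (free M (Y × Z)) (idm _) (xi Y Z)
        ∘ alpha (free M X) (free M Y) (free M Z);
  xi_lunit : forall X, fmap M (snd one X) ∘ xi one X = lam (free M X);
  xi_runit : forall X, fmap M (fst X one) ∘ xi X one = rho (free M X);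
  xi_sym : forall X Y, fmap M (swap X Y) ∘ xi X Y = xi Y X ∘ sigma (free M X) (free M Y)
}.
Arguments tens {C} s.
Arguments tb {C} s.
Arguments tmap {C} s {A A' B B'}.
Arguments alpha {C} s.
Arguments lam {C} s.
Arguments rho {C} s.
Arguments xi {C} s.
Arguments xi_inv {C} s.

Definition is_coalg {C} (M : Monad C) (A : Alg M) (b : hom (acar A) (T M (acar A))) : Prop :=
  b ∘ act A = mu M (acar A) ∘ fmap M b /\
  act A ∘ b = idm (acar A) /\
  fmap M (eta M (acar A)) ∘ b = fmap M b ∘ b.

Definition is_coalg_hom {C} (M : Monad C) (A B : Alg M)
    (bA : hom (acar A) (T M (acar A))) (bB : hom (acar B) (T M (acar B)))
    (f : hom (acar A) (acar B)) : Prop :=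
  is_alg_hom A B f /\ bB ∘ f = fmap M f ∘ bA.

Definition tens_coalg {C} (S : Setting C) (A1 A2 : Alg S)
    (b1 : hom (acar A1) (T S (acar A1))) (b2 : hom (acar A2) (T S (acar A2)))
  : hom (acar (tens S A1 A2)) (T S (acar (tens S A1 A2))) :=
  fmap S (tb S A1 A2) ∘ xi S (acar A1) (acar A2)
  ∘ tmap S (A' := free S (acar A1)) (B' := free S (acar A2)) b1 b2.

Definition unitA {C} (S : Setting C) : Alg S := free S one.
Definition free_coalg {C} (M : Monad C) (Y : C) : hom (T M Y) (T M (T M Y)) :=
  fmap M (eta M Y).

Definition d_b {C} (S : Setting C) (A : Alg S) (b : hom (acar A) (T S (acar A)))
  : hom (acar A) (acar (tens S A A)) :=
  tmap S (A := free S (acar A)) (B := free S (acar A)) (act A) (act A)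
  ∘ xi_inv S (acar A) (acar A) ∘ fmap S (diag (acar A)) ∘ b.
Definition u_b {C} (S : Setting C) (A : Alg S) (b : hom (acar A) (T S (acar A)))
  : hom (acar A) (T S one) :=
  fmap S (bang (acar A)) ∘ b.

Definition coalg_terminal {C} (M : Monad C) (A : Alg M) (b : hom (acar A) (T M (acar A))) : Prop :=
  forall (Z : Alg M) (c : hom (acar Z) (T M (acar Z))), is_coalg M Z c ->
    exists h, is_coalg_hom M Z A c b h /\
      forall h', is_coalg_hom M Z A c b h' -> h' = h.

Definition coalg_product {C} (M : Monad C)
    (A1 A2 P : Alg M)
    (b1 : hom (acar A1) (T M (acar A1))) (b2 : hom (acar A2) (T M (acar A2)))
    (bP : hom (acar P) (T M (acar P)))
    (q1 : hom (acar P) (acar A1)) (q2 : hom (acar P) (acar A2)) : Prop :=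
  is_coalg_hom M P A1 bP b1 q1 /\ is_coalg_hom M P A2 bP b2 q2 /\
  forall (Z : Alg M) (c : hom (acar Z) (T M (acar Z))), is_coalg M Z c ->
  forall f1 f2, is_coalg_hom M Z A1 c b1 f1 -> is_coalg_hom M Z A2 c b2 f2 ->
    exists h, (is_coalg_hom M Z P c bP h /\ q1 ∘ h = f1 /\ q2 ∘ h = f2) /\
      forall h', is_coalg_hom M Z P c bP h' /\ q1 ∘ h' = f1 /\ q2 ∘ h' = f2 -> h' = h.


(* Everything rests on extending along a basis: for a basis b of (X, a) and any
   morphism f from X into the carrier of an algebra B, a_B ∘ T(f) ∘ b is an algebra
   map, and d_b, u_b are the extensions of x ↦ x ⊗ x and of x ↦ η(∗).  The
   comultiplication law T(η) ∘ b = T(b) ∘ b makes an extension nested inside another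
   one collapse, which yields coassociativity and counitality, and it is also what
   makes d_b and u_b coalgebra maps.  On a tensor, (b1 × b2) followed by the double
   strength again satisfies the comultiplication law, so maps out of X1 ⊗ X2 can be
   checked on units.  The projections are built from the counits; the pairing of f1
   and f2 is (f1 ⊗ f2) ∘ d_c, and it is unique because (π1 ⊗ π2) ∘ d = id and d is
   natural.  Commutativity of T is needed for π2 to be a coalgebra map.  Finally ξ
   transports this product to the free coalgebras, and T(1) is final because
   T(!) ∘ T(η_1) = id. *)

Ltac assoc_r := repeat rewrite <- comp_assoc; rewrite ?comp_idl, ?comp_idr.

Lemma comp_eq_pre2 {C : CartCat} {B D E : C} {x : hom D E} {y : hom B D} {z : hom B E} :
  x ∘ y = z -> forall A (r : hom A B), x ∘ (y ∘ r) = z ∘ r.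
Proof. intros H A r. rewrite comp_assoc, H. reflexivity. Qed.

Lemma comp_eq_pre3 {C : CartCat} {B D E F : C}
    {x : hom E F} {y : hom D E} {w : hom B D} {z : hom B F} :
  x ∘ (y ∘ w) = z -> forall A (r : hom A B), x ∘ (y ∘ (w ∘ r)) = z ∘ r.
Proof. intros H A r. rewrite <- H, !comp_assoc. reflexivity. Qed.

Lemma comp_eq_pre4 {C : CartCat} {B D E F G : C}
    {x : hom F G} {y : hom E F} {w : hom D E} {v : hom B D} {z : hom B G} :
  x ∘ (y ∘ (w ∘ v)) = z -> forall A (r : hom A B), x ∘ (y ∘ (w ∘ (v ∘ r))) = z ∘ r.
Proof. intros H A r. rewrite <- H, !comp_assoc. reflexivity. Qed.

(* Rewrite with an equation whose left side is a right-associated composite of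
   up to four morphisms, also where that composite is only a prefix of a longer
   chain; the goal is then renormalised by [assoc_r]. *)
Ltac crewrite E :=
  let H := fresh in
  pose proof E as H;
  first [ rewrite H | rewrite (comp_eq_pre2 H) | rewrite (comp_eq_pre3 H)
        | rewrite (comp_eq_pre4 H) ];
  clear H; assoc_r.

Section CartesianCategory.
Context {C : CartCat}.

Lemma fst_pair_r {Z A B W : C} (f : hom Z A) (g : hom Z B) (r : hom W Z) :
  fst A B ∘ (pair f g ∘ r) = f ∘ r.
Proof. apply comp_eq_pre2, fst_pair. Qed.

Lemma snd_pair_r {Z A B W : C} (f : hom Z A) (g : hom Z B) (r : hom W Z) :
  snd A B ∘ (pair f g ∘ r) = g ∘ r.
Proof. apply comp_eq_pre2, snd_pair. Qed.

Lemma pair_ext {Z A B : C} (h h' : hom Z (A × B)) :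
  fst A B ∘ h = fst A B ∘ h' -> snd A B ∘ h = snd A B ∘ h' -> h = h'.
Proof.
  intros H1 H2.
  rewrite <- (pair_eta _ _ _ _ h), <- (pair_eta _ _ _ _ h'), H1, H2. reflexivity.
Qed.

Lemma pair_comp {Z A B W : C} (f : hom Z A) (g : hom Z B) (h : hom W Z) :
  pair f g ∘ h = pair (f ∘ h) (g ∘ h).
Proof.
  apply pair_ext; assoc_r; rewrite ?fst_pair_r, ?snd_pair_r, ?fst_pair, ?snd_pair;
    reflexivity.
Qed.

Lemma pair_fst_snd {A B : C} : pair (fst A B) (snd A B) = idm (A × B).
Proof. apply pair_ext; rewrite ?fst_pair, ?snd_pair, ?comp_idr; reflexivity. Qed.

Lemma bang_comp {A B : C} (f : hom A B) : bang B ∘ f = bang A.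
Proof. apply bang_uniq. Qed.

Lemma bang_comp_r {A B W : C} (f : hom A B) (r : hom W A) : bang B ∘ (f ∘ r) = bang A ∘ r.
Proof. apply comp_eq_pre2, bang_comp. Qed.

End CartesianCategory.

Ltac prod_simpl := unfold pmap, diag, swap, assocr;
  repeat (assoc_r; rewrite ?pair_comp, ?fst_pair_r, ?snd_pair_r, ?fst_pair, ?snd_pair,
                           ?bang_comp_r, ?bang_comp, ?pair_fst_snd).

Section ProductMaps.
Context {C : CartCat}.

Lemma pmap_comp {A B A' B' A'' B'' : C} (f : hom A A') (g : hom B B')
    (f' : hom A' A'') (g' : hom B' B'') :
  pmap f' g' ∘ pmap f g = pmap (f' ∘ f) (g' ∘ g).
Proof. prod_simpl. reflexivity. Qed.

Lemma pmap_diag {A B : C} (f : hom A B) : pmap f f ∘ diag A = diag B ∘ f.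
Proof. prod_simpl. reflexivity. Qed.

Lemma assocr_diag (A : C) :
  assocr A A A ∘ (pmap (diag A) (idm A) ∘ diag A) = pmap (idm A) (diag A) ∘ diag A.
Proof. prod_simpl. reflexivity. Qed.

Lemma swap_invol (A B : C) : swap B A ∘ swap A B = idm (A × B).
Proof. apply pair_ext; prod_simpl; reflexivity. Qed.

End ProductMaps.

Section MonadTheory.
Context {C : CartCat} (M : Monad C).

Lemma fmap_comp_eq {A B D : C} {x : hom B D} {y : hom A B} {z : hom A D} :
  x ∘ y = z -> fmap M x ∘ fmap M y = fmap M z.
Proof. intros H. rewrite <- fmap_comp, H. reflexivity. Qed.

Lemma fmap_comp3_eq {A B D E : C} {x : hom D E} {y : hom B D} {w : hom A B} {z : hom A E} :
  x ∘ (y ∘ w) = z -> fmap M x ∘ (fmap M y ∘ fmap M w) = fmap M z.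
Proof. intros H. rewrite <- !fmap_comp, H. reflexivity. Qed.

Lemma fmap_comp4_eq {A B D E F : C}
    {x : hom E F} {y : hom D E} {w : hom B D} {v : hom A B} {z : hom A F} :
  x ∘ (y ∘ (w ∘ v)) = z -> fmap M x ∘ (fmap M y ∘ (fmap M w ∘ fmap M v)) = fmap M z.
Proof. intros H. rewrite <- !fmap_comp, H. reflexivity. Qed.

Lemma alg_hom_id (A : Alg M) : is_alg_hom A A (idm (acar A)).
Proof. unfold is_alg_hom. rewrite fmap_id, comp_idl, comp_idr. reflexivity. Qed.

Lemma alg_hom_comp {A B D : Alg M} (f : hom (acar A) (acar B)) (g : hom (acar B) (acar D)) :
  is_alg_hom A B f -> is_alg_hom B D g -> is_alg_hom A D (g ∘ f).
Proof.
  unfold is_alg_hom. intros Hf Hg. assoc_r. rewrite Hf. crewrite Hg.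
  rewrite fmap_comp. assoc_r. reflexivity.
Qed.

Lemma fmap_alg_hom {X Y : C} (f : hom X Y) : is_alg_hom (free M X) (free M Y) (fmap M f).
Proof. apply mu_nat. Qed.

Lemma act_alg_hom (A : Alg M) : is_alg_hom (free M (acar A)) A (act A).
Proof. symmetry. apply (act_law _ A). Qed.

Lemma alg_hom_inv {A B : Alg M} (f : hom (acar A) (acar B)) (g : hom (acar B) (acar A)) :
  is_alg_hom A B f -> g ∘ f = idm _ -> f ∘ g = idm _ -> is_alg_hom B A g.
Proof.
  unfold is_alg_hom. intros Hf H1 H2.
  transitivity (g ∘ (act B ∘ fmap M (f ∘ g))).
  - rewrite H2, fmap_id, comp_idr. reflexivity.
  - rewrite fmap_comp. assoc_r. crewrite (eq_sym Hf). crewrite H1. reflexivity.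
Qed.

Lemma free_alg_hom_eq {Y : C} {B : Alg M} (g h : hom (T M Y) (acar B)) :
  is_alg_hom (free M Y) B g -> is_alg_hom (free M Y) B h ->
  g ∘ eta M Y = h ∘ eta M Y -> g = h.
Proof.
  assert (E : forall k : hom (T M Y) (acar B),
             is_alg_hom (free M Y) B k -> k = act B ∘ fmap M (k ∘ eta M Y)).
  { intros k Hk. rewrite fmap_comp. crewrite (eq_sym Hk).
    simpl. rewrite mu_T_eta, comp_idr. reflexivity. }
  intros Hg Hh Heq. rewrite (E g Hg), (E h Hh), Heq. reflexivity.
Qed.

End MonadTheory.

Section StrongMonadTheory.
Context {C : CartCat} (M : StrongMonad C).

Lemma st_nat_l {A A' B : C} (f : hom A A') :
  st M A' B ∘ pmap f (idm (T M B)) = fmap M (pmap f (idm B)) ∘ st M A B.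
Proof. pose proof (st_nat _ M A A' B B f (idm B)) as H. rewrite fmap_id in H. exact H. Qed.

Lemma fmap_snd_st (A B : C) : fmap M (snd A B) ∘ st M A B = snd A (T M B).
Proof.
  assert (E : snd A B = snd one B ∘ pmap (bang A) (idm B)) by (prod_simpl; reflexivity).
  rewrite E, fmap_comp. assoc_r. crewrite (eq_sym (st_nat_l (B := B) (bang A))).
  crewrite (st_unit _ M B). prod_simpl. reflexivity.
Qed.

Lemma fmap_fst_cst (A B : C) : fmap M (fst A B) ∘ cst M A B = fst (T M A) B.
Proof.
  unfold cst. assoc_r.
  assert (E : fst A B ∘ swap B A = snd B A) by (prod_simpl; reflexivity).
  crewrite (fmap_comp_eq M E). crewrite (fmap_snd_st B A). prod_simpl. reflexivity.
Qed.

Lemma cst_eta (A B : C) : cst M A B ∘ pmap (eta M A) (idm B) = eta M (A × B).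
Proof.
  unfold cst. assoc_r.
  assert (E : swap (T M A) B ∘ pmap (eta M A) (idm B) = pmap (idm B) (eta M A) ∘ swap A B)
    by (prod_simpl; reflexivity).
  crewrite E. crewrite (st_eta _ M B A). crewrite (eta_nat _ M _ _ (swap B A)).
  crewrite (swap_invol A B). reflexivity.
Qed.

Lemma cst_nat {A A' B B' : C} (f : hom A A') (g : hom B B') :
  cst M A' B' ∘ pmap (fmap M f) g = fmap M (pmap f g) ∘ cst M A B.
Proof.
  unfold cst. assoc_r.
  assert (E1 : swap (T M A') B' ∘ pmap (fmap M f) g = pmap g (fmap M f) ∘ swap (T M A) B)
    by (prod_simpl; reflexivity).
  assert (E2 : swap B' A' ∘ pmap g f = pmap f g ∘ swap B A) by (prod_simpl; reflexivity).
  crewrite E1. crewrite (st_nat _ M _ _ _ _ g f).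
  crewrite (fmap_comp_eq M E2). rewrite fmap_comp. assoc_r. reflexivity.
Qed.

Lemma dstL_eta (A B : C) : dstL M A B ∘ pmap (eta M A) (eta M B) = eta M (A × B).
Proof.
  unfold dstL. assoc_r.
  assert (E : pmap (eta M A) (eta M B)
              = pmap (idm (T M A)) (eta M B) ∘ pmap (eta M A) (idm B))
    by (prod_simpl; reflexivity).
  rewrite E. assoc_r. crewrite (st_eta _ M (T M A) B). crewrite (eta_nat _ M _ _ (cst M A B)).
  crewrite (mu_eta_T _ M (A × B)). apply cst_eta.
Qed.

Lemma dstL_nat {A A' B B' : C} (f : hom A A') (g : hom B B') :
  dstL M A' B' ∘ pmap (fmap M f) (fmap M g) = fmap M (pmap f g) ∘ dstL M A B.
Proof.
  unfold dstL. assoc_r. crewrite (st_nat _ M _ _ _ _ (fmap M f) g).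
  crewrite (fmap_comp_eq M (cst_nat f g)). rewrite fmap_comp. assoc_r.
  crewrite (eq_sym (mu_nat _ M _ _ (pmap f g))). reflexivity.
Qed.

Lemma fmap_fst_dstL (A B : C) :
  fmap M (fst A B) ∘ dstL M A B = mu M A ∘ (fmap M (fst (T M A) B) ∘ st M (T M A) B).
Proof.
  unfold dstL. assoc_r. crewrite (mu_nat _ M _ _ (fst A B)).
  crewrite (fmap_comp_eq M (fmap_fst_cst A B)). reflexivity.
Qed.

Lemma fmap_snd_dstR (A B : C) :
  fmap M (snd A B) ∘ dstR M A B = mu M B ∘ (fmap M (snd A (T M B)) ∘ cst M A (T M B)).
Proof.
  unfold dstR. assoc_r. crewrite (mu_nat _ M _ _ (snd A B)).
  crewrite (fmap_comp_eq M (fmap_snd_st A B)). reflexivity.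
Qed.

Lemma bihom_dstL (X Y D : Alg M) (G : hom (acar X × acar Y) (acar D)) :
  is_bihom M X Y D G ->
  act D ∘ (fmap M G ∘ dstL M (acar X) (acar Y)) = G ∘ pmap (act X) (act Y).
Proof.
  intros [HR HL]. destruct (act_law _ D) as [_ HD].
  assert (EL : act D ∘ (fmap M G ∘ cst M (acar X) (acar Y)) = G ∘ pmap (act X) (idm (acar Y)))
    by (rewrite HL; assoc_r; reflexivity).
  assert (ER : act D ∘ (fmap M G ∘ st M (acar X) (acar Y)) = G ∘ pmap (idm (acar X)) (act Y))
    by (rewrite HR; assoc_r; reflexivity).
  unfold dstL. assoc_r.
  crewrite (mu_nat _ M _ _ G). crewrite (eq_sym HD).
  crewrite (fmap_comp3_eq M EL). rewrite fmap_comp. assoc_r.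
  crewrite (eq_sym (st_nat_l (B := acar Y) (act X))).
  crewrite ER. prod_simpl. reflexivity.
Qed.

End StrongMonadTheory.

Definition rscale {C : CartCat} {M : StrongMonad C} (A : Alg M)
  : hom (acar A × T M one) (acar A) :=
  act A ∘ (fmap M (fst (acar A) one) ∘ st M (acar A) one).

Definition lscale {C : CartCat} {M : StrongMonad C} (A : Alg M)
  : hom (T M one × acar A) (acar A) :=
  act A ∘ (fmap M (snd one (acar A)) ∘ cst M one (acar A)).

Section Scaling.
Context {C : CartCat} {M : StrongMonad C} (A : Alg M).

Lemma rscale_eta : rscale A ∘ pmap (idm (acar A)) (eta M one) = fst (acar A) one.
Proof.
  unfold rscale. assoc_r. crewrite (st_eta _ M (acar A) one).
  crewrite (eta_nat _ M _ _ (fst (acar A) one)). crewrite (proj1 (act_law _ A)). reflexivity.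
Qed.

Lemma lscale_eta : lscale A ∘ pmap (eta M one) (idm (acar A)) = snd one (acar A).
Proof.
  unfold lscale. assoc_r. crewrite (cst_eta M one (acar A)).
  crewrite (eta_nat _ M _ _ (snd one (acar A))). crewrite (proj1 (act_law _ A)). reflexivity.
Qed.

Lemma rscale_pmap_eta (Y : C) :
  (rscale A ∘ pmap (act A) (fmap M (bang Y))) ∘ pmap (eta M (acar A)) (eta M Y)
  = fst (acar A) Y.
Proof.
  assert (E : pmap (act A) (fmap M (bang Y)) ∘ pmap (eta M (acar A)) (eta M Y)
              = pmap (idm (acar A)) (eta M one) ∘ pmap (idm (acar A)) (bang Y)).
  { prod_simpl. crewrite (proj1 (act_law _ A)). crewrite (eta_nat _ M _ _ (bang Y)).
    prod_simpl. reflexivity. }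
  rewrite <- comp_assoc, E. crewrite rscale_eta. prod_simpl. reflexivity.
Qed.

Lemma lscale_pmap_eta (Y : C) :
  (lscale A ∘ pmap (fmap M (bang Y)) (act A)) ∘ pmap (eta M Y) (eta M (acar A))
  = snd Y (acar A).
Proof.
  assert (E : pmap (fmap M (bang Y)) (act A) ∘ pmap (eta M Y) (eta M (acar A))
              = pmap (eta M one) (idm (acar A)) ∘ pmap (bang Y) (idm (acar A))).
  { prod_simpl. crewrite (proj1 (act_law _ A)). crewrite (eta_nat _ M _ _ (bang Y)).
    prod_simpl. reflexivity. }
  rewrite <- comp_assoc, E. crewrite lscale_eta. prod_simpl. reflexivity.
Qed.

End Scaling.

Create HintDb alg_hom.
#[local] Hint Resolve alg_hom_id fmap_alg_hom act_alg_hom : alg_hom.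
#[local] Hint Extern 1 (is_alg_hom ?A ?D (?g ∘ ?f)) =>
  refine (alg_hom_comp _ (A := A) (D := D) f g _ _) : alg_hom.
(* Unification cannot recover the middle algebra of a composite through [T Y];
   try the free one. *)
#[local] Hint Extern 1 (is_alg_hom ?A ?D (@comp _ _ (T ?M ?Y) _ ?g ?f)) =>
  refine (alg_hom_comp _ (A := A) (B := free M Y) (D := D) f g _ _) : alg_hom.
Ltac alg_hom := solve [eauto 12 with alg_hom].

Section Tensor.
Context {C : CartCat} (S : Setting C).

Lemma xi_inv_alg_hom (X Y : C) :
  is_alg_hom (free S (X × Y)) (tens S (free S X) (free S Y)) (xi_inv S X Y).
Proof.
  destruct (xi_iso _ S X Y) as [Hxi Hxi_inv].
  exact (alg_hom_inv S _ _ (xi_hom _ S X Y) Hxi_inv Hxi).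
Qed.

Lemma tb_act_r (A B : Alg S) :
  tb S A B ∘ pmap (idm (acar A)) (act B)
  = act (tens S A B) ∘ (fmap S (tb S A B) ∘ st S (acar A) (acar B)).
Proof. rewrite (proj1 (tb_bihom _ S A B)). assoc_r. reflexivity. Qed.

Lemma tb_act_l (A B : Alg S) :
  tb S A B ∘ pmap (act A) (idm (acar B))
  = act (tens S A B) ∘ (fmap S (tb S A B) ∘ cst S (acar A) (acar B)).
Proof. rewrite (proj2 (tb_bihom _ S A B)). assoc_r. reflexivity. Qed.

Lemma rho_tb_rscale (A : Alg S) : rho S A ∘ tb S A (unitA S) = rscale A.
Proof. unfold unitA. rewrite (rho_tb _ S A). unfold rscale. assoc_r. reflexivity. Qed.

Lemma lam_tb_lscale (A : Alg S) : lam S A ∘ tb S (unitA S) A = lscale A.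
Proof. unfold unitA. rewrite (lam_tb _ S A). unfold lscale. assoc_r. reflexivity. Qed.

Lemma alg_hom_tb_bihom (A B D : Alg S) (g : hom (acar (tens S A B)) (acar D)) :
  is_alg_hom (tens S A B) D g -> is_bihom S A B D (g ∘ tb S A B).
Proof.
  unfold is_alg_hom. intros H. split; assoc_r.
  - crewrite (tb_act_r A B). crewrite H. rewrite fmap_comp. assoc_r. reflexivity.
  - crewrite (tb_act_l A B). crewrite H. rewrite fmap_comp. assoc_r. reflexivity.
Qed.

Lemma tens_hom_eq (A B D : Alg S) (g h : hom (acar (tens S A B)) (acar D)) :
  is_alg_hom (tens S A B) D g -> is_alg_hom (tens S A B) D h ->
  g ∘ tb S A B = h ∘ tb S A B -> g = h.
Proof.
  intros Hg Hh E.
  destruct (tb_univ _ S A B D (g ∘ tb S A B) (alg_hom_tb_bihom A B D g Hg)) as [g0 [_ U]].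
  rewrite (U g (conj Hg eq_refl)), (U h (conj Hh (eq_sym E))). reflexivity.
Qed.

Lemma tmap_alg_hom {A A' B B' : Alg S} (f : hom (acar A) (acar A')) (g : hom (acar B) (acar B')) :
  is_alg_hom A A' f -> is_alg_hom B B' g ->
  is_alg_hom (tens S A B) (tens S A' B') (tmap S f g).
Proof. intros Hf Hg. exact (proj1 (tmap_spec _ S A A' B B' f g Hf Hg)). Qed.

End Tensor.

#[local] Hint Resolve xi_inv_alg_hom tmap_alg_hom xi_hom alpha_hom lam_hom rho_hom : alg_hom.

Section TensorFunctor.
Context {C : CartCat} (S : Setting C).

Lemma tmap_tb {A A' B B' : Alg S} (f : hom (acar A) (acar A')) (g : hom (acar B) (acar B')) :
  is_alg_hom A A' f -> is_alg_hom B B' g ->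
  tmap S f g ∘ tb S A B = tb S A' B' ∘ pmap f g.
Proof. intros Hf Hg. exact (proj2 (tmap_spec _ S A A' B B' f g Hf Hg)). Qed.

Lemma tmap_tb_r {A A' B B' : Alg S} (f : hom (acar A) (acar A')) (g : hom (acar B) (acar B'))
    {W : C} (r : hom W (acar A × acar B)) :
  is_alg_hom A A' f -> is_alg_hom B B' g ->
  tmap S f g ∘ (tb S A B ∘ r) = tb S A' B' ∘ (pmap f g ∘ r).
Proof. intros Hf Hg. rewrite (comp_eq_pre2 (tmap_tb f g Hf Hg)). assoc_r. reflexivity. Qed.

Lemma tmap_comp {A A' A'' B B' B'' : Alg S}
    (f : hom (acar A) (acar A')) (g : hom (acar B) (acar B'))
    (f' : hom (acar A') (acar A'')) (g' : hom (acar B') (acar B'')) :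
  is_alg_hom A A' f -> is_alg_hom B B' g -> is_alg_hom A' A'' f' -> is_alg_hom B' B'' g' ->
  tmap S f' g' ∘ tmap S f g = tmap S (f' ∘ f) (g' ∘ g).
Proof.
  intros Hf Hg Hf' Hg'. apply tens_hom_eq; try alg_hom.
  assoc_r. crewrite (tmap_tb f g Hf Hg). crewrite (tmap_tb f' g' Hf' Hg').
  rewrite (tmap_tb (f' ∘ f) (g' ∘ g)) by alg_hom.
  rewrite pmap_comp. reflexivity.
Qed.

Lemma xi_inv_eta (X Y : C) :
  xi_inv S X Y ∘ eta S (X × Y) = tb S (free S X) (free S Y) ∘ pmap (eta S X) (eta S Y).
Proof.
  destruct (xi_iso _ S X Y) as [_ H].
  rewrite <- (dstL_eta S X Y), <- (xi_tb _ S X Y). assoc_r. rewrite (comp_eq_pre2 H). assoc_r.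
  reflexivity.
Qed.

End TensorFunctor.

Definition basis_ext {C : CartCat} {M : Monad C} {A : Alg M} (b : hom (acar A) (T M (acar A)))
    {B : Alg M} (f : hom (acar A) (acar B)) : hom (acar A) (acar B) :=
  act B ∘ (fmap M f ∘ b).

Section BasisExtension.
Context {C : CartCat} {M : Monad C} {A : Alg M} (b : hom (acar A) (T M (acar A))).

Lemma basis_ext_alg_hom {B : Alg M} (f : hom (acar A) (acar B)) :
  is_alg_hom A (free M (acar A)) b -> is_alg_hom A B (basis_ext b f).
Proof. intros Hb. unfold basis_ext. alg_hom. Qed.

Lemma alg_hom_basis_ext {B B' : Alg M} (h : hom (acar B) (acar B')) (f : hom (acar A) (acar B)) :
  is_alg_hom B B' h -> h ∘ basis_ext b f = basis_ext b (h ∘ f).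
Proof.
  unfold basis_ext, is_alg_hom. intros Hh. assoc_r. crewrite Hh.
  rewrite fmap_comp. assoc_r. reflexivity.
Qed.

Lemma basis_ext_id : act A ∘ b = idm _ -> basis_ext b (idm (acar A)) = idm _.
Proof. intros H. unfold basis_ext. rewrite fmap_id, comp_idl. exact H. Qed.

End BasisExtension.

#[local] Hint Resolve basis_ext_alg_hom : alg_hom.

Section DiagonalAndCounit.
Context {C : CartCat} (S : Setting C) (A : Alg S) (b : hom (acar A) (T S (acar A))).

Lemma d_b_basis_ext : d_b S A b = basis_ext b (tb S A A ∘ diag (acar A)).
Proof.
  assert (Hext : tmap S (A := free S (acar A)) (B := free S (acar A)) (act A) (act A)
                ∘ xi_inv S (acar A) (acar A)
              = act (tens S A A) ∘ fmap S (tb S A A)).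
  { apply (free_alg_hom_eq S); try alg_hom.
    destruct (act_law _ A) as [HA _]. destruct (act_law _ (tens S A A)) as [HT _].
    assoc_r. crewrite (xi_inv_eta S (acar A) (acar A)).
    rewrite tmap_tb_r by apply act_alg_hom.
    crewrite (eta_nat _ S _ _ (tb S A A)). crewrite HT. prod_simpl. repeat crewrite HA.
    prod_simpl. reflexivity. }
  unfold d_b, basis_ext. rewrite fmap_comp. assoc_r. crewrite Hext. reflexivity.
Qed.

Lemma u_b_basis_ext : u_b S A b = basis_ext (B := unitA S) b (eta S one ∘ bang (acar A)).
Proof.
  unfold u_b, basis_ext. simpl. rewrite fmap_comp. assoc_r. crewrite (mu_T_eta _ S one).
  reflexivity.
Qed.

End DiagonalAndCounit.

Section NestedExtension.
Context {C : CartCat} (S : Setting C) (A : Alg S) (b : hom (acar A) (T S (acar A))).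
Hypothesis Hb : is_coalg S A b.

(* The comultiplication law [T(eta) ∘ b = T(b) ∘ b] says that on the basis the
   inner extension is evaluated at basis elements, where it agrees with [f]. *)
Lemma basis_ext_nested_l {B : Alg S} (f : hom (acar A) (acar B)) :
  basis_ext b (tb S B A ∘ (pmap (basis_ext b f) (idm (acar A)) ∘ diag (acar A)))
  = basis_ext b (tb S B A ∘ (pmap f (idm (acar A)) ∘ diag (acar A))).
Proof.
  destruct Hb as [_ [Hab Hcomul]]. destruct (act_law _ A) as [Hae _].
  assert (Hinner : tb S B A ∘ (pmap (basis_ext b f) (idm (acar A)) ∘ diag (acar A))
    = act (tens S B A) ∘ (fmap S (tb S B A) ∘ (fmap S (pmap f (idm (acar A)))
        ∘ (cst S (acar A) (acar A) ∘ (pmap (idm (T S (acar A))) (act A)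
        ∘ (diag (T S (acar A)) ∘ b)))))).
  { assert (E : pmap (basis_ext b f) (idm (acar A)) ∘ diag (acar A)
               = pmap (act B) (idm (acar A)) ∘ (pmap (fmap S f) (idm (acar A))
                 ∘ (pmap (idm _) (act A) ∘ (diag (T S (acar A)) ∘ b))))
      by (unfold basis_ext; prod_simpl; repeat crewrite Hab; reflexivity).
    rewrite E. crewrite (tb_act_l S B A). crewrite (cst_nat S f (idm (acar A))). reflexivity. }
  assert (Hunit : cst S (acar A) (acar A) ∘ (pmap (idm (T S (acar A))) (act A)
                 ∘ (diag (T S (acar A)) ∘ eta S (acar A)))
               = eta S (acar A × acar A) ∘ diag (acar A)).
  { assert (E : pmap (idm (T S (acar A))) (act A) ∘ (diag (T S (acar A)) ∘ eta S (acar A))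
               = pmap (eta S (acar A)) (idm (acar A)) ∘ diag (acar A))
      by (prod_simpl; repeat crewrite Hae; reflexivity).
    rewrite E. crewrite (cst_eta S (acar A) (acar A)). reflexivity. }
  rewrite Hinner. unfold basis_ext. rewrite !fmap_comp. assoc_r.
  crewrite (eq_sym Hcomul). crewrite (fmap_comp4_eq S Hunit). rewrite fmap_comp. assoc_r.
  crewrite (proj2 (act_law _ (tens S B A))).
  crewrite (eq_sym (mu_nat _ S _ _ (tb S B A))).
  crewrite (eq_sym (mu_nat _ S _ _ (pmap f (idm (acar A))))).
  crewrite (mu_T_eta _ S (acar A × acar A)). reflexivity.
Qed.

Lemma basis_ext_nested_r {B : Alg S} (f : hom (acar A) (acar B)) :
  basis_ext b (tb S A B ∘ (pmap (idm (acar A)) (basis_ext b f) ∘ diag (acar A)))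
  = basis_ext b (tb S A B ∘ (pmap (idm (acar A)) f ∘ diag (acar A))).
Proof.
  destruct Hb as [_ [Hab Hcomul]]. destruct (act_law _ A) as [Hae _].
  assert (Hinner : tb S A B ∘ (pmap (idm (acar A)) (basis_ext b f) ∘ diag (acar A))
    = act (tens S A B) ∘ (fmap S (tb S A B) ∘ (fmap S (pmap (idm (acar A)) f)
        ∘ (st S (acar A) (acar A) ∘ (pmap (act A) (idm (T S (acar A)))
        ∘ (diag (T S (acar A)) ∘ b)))))).
  { assert (E : pmap (idm (acar A)) (basis_ext b f) ∘ diag (acar A)
               = pmap (idm (acar A)) (act B) ∘ (pmap (idm (acar A)) (fmap S f)
                 ∘ (pmap (act A) (idm _) ∘ (diag (T S (acar A)) ∘ b))))
      by (unfold basis_ext; prod_simpl; repeat crewrite Hab; reflexivity).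
    rewrite E. crewrite (tb_act_r S A B).
    crewrite (st_nat _ S (acar A) (acar A) (acar A) (acar B) (idm (acar A)) f). reflexivity. }
  assert (Hunit : st S (acar A) (acar A) ∘ (pmap (act A) (idm (T S (acar A)))
                 ∘ (diag (T S (acar A)) ∘ eta S (acar A)))
               = eta S (acar A × acar A) ∘ diag (acar A)).
  { assert (E : pmap (act A) (idm (T S (acar A))) ∘ (diag (T S (acar A)) ∘ eta S (acar A))
               = pmap (idm (acar A)) (eta S (acar A)) ∘ diag (acar A))
      by (prod_simpl; repeat crewrite Hae; reflexivity).
    rewrite E. crewrite (st_eta _ S (acar A) (acar A)). reflexivity. }
  rewrite Hinner. unfold basis_ext. rewrite !fmap_comp. assoc_r.
  crewrite (eq_sym Hcomul). crewrite (fmap_comp4_eq S Hunit). rewrite fmap_comp. assoc_r.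
  crewrite (proj2 (act_law _ (tens S A B))).
  crewrite (eq_sym (mu_nat _ S _ _ (tb S A B))).
  crewrite (eq_sym (mu_nat _ S _ _ (pmap (idm (acar A)) f))).
  crewrite (mu_T_eta _ S (acar A × acar A)). reflexivity.
Qed.

End NestedExtension.

Section BasisHomomorphisms.
Context {C : CartCat} (S : Setting C).

Lemma d_b_alg_hom (A : Alg S) (b : hom (acar A) (T S (acar A))) :
  is_alg_hom A (free S (acar A)) b -> is_alg_hom A (tens S A A) (d_b S A b).
Proof. intros H. rewrite d_b_basis_ext. alg_hom. Qed.

Lemma u_b_alg_hom (A : Alg S) (b : hom (acar A) (T S (acar A))) :
  is_alg_hom A (free S (acar A)) b -> is_alg_hom A (unitA S) (u_b S A b).
Proof. intros H. rewrite u_b_basis_ext. alg_hom. Qed.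

Lemma tens_coalg_alg_hom (A1 A2 : Alg S)
    (b1 : hom (acar A1) (T S (acar A1))) (b2 : hom (acar A2) (T S (acar A2))) :
  is_alg_hom A1 (free S (acar A1)) b1 -> is_alg_hom A2 (free S (acar A2)) b2 ->
  is_alg_hom (tens S A1 A2) (free S (acar (tens S A1 A2))) (tens_coalg S A1 A2 b1 b2).
Proof. intros H1 H2. unfold tens_coalg. alg_hom. Qed.

Lemma tens_coalg_tb (A1 A2 : Alg S)
    (b1 : hom (acar A1) (T S (acar A1))) (b2 : hom (acar A2) (T S (acar A2))) :
  is_alg_hom A1 (free S (acar A1)) b1 -> is_alg_hom A2 (free S (acar A2)) b2 ->
  tens_coalg S A1 A2 b1 b2 ∘ tb S A1 A2
  = fmap S (tb S A1 A2) ∘ (dstL S (acar A1) (acar A2) ∘ pmap b1 b2).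
Proof.
  intros H1 H2. unfold tens_coalg. assoc_r.
  crewrite (tmap_tb S (A' := free S (acar A1)) (B' := free S (acar A2)) b1 b2 H1 H2).
  crewrite (xi_tb _ S (acar A1) (acar A2)). reflexivity.
Qed.

End BasisHomomorphisms.

#[local] Hint Resolve d_b_alg_hom u_b_alg_hom tens_coalg_alg_hom : alg_hom.

Section Comonoid.
Context {C : CartCat} (S : Setting C) (A : Alg S) (b : hom (acar A) (T S (acar A))).
Hypothesis Hb : is_coalg S A b.

Lemma d_b_coalg_hom : is_coalg_hom S A (tens S A A) b (tens_coalg S A A b b) (d_b S A b).
Proof.
  pose proof Hb as [Hbh [_ Hcomul]].
  split; [alg_hom |].
  assert (Eeta : dstL S (acar A) (acar A) ∘ (diag (T S (acar A)) ∘ eta S (acar A))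
                 = eta S _ ∘ diag (acar A)).
  { rewrite <- pmap_diag. assoc_r. crewrite (dstL_eta S (acar A) (acar A)). reflexivity. }
  rewrite d_b_basis_ext.
  rewrite (alg_hom_basis_ext b (B' := free S _) (tens_coalg S A A b b)) by alg_hom.
  rewrite (comp_eq_pre2 (tens_coalg_tb S A A b b Hbh Hbh)). assoc_r. rewrite pmap_diag.
  unfold basis_ext. simpl. rewrite !fmap_comp. assoc_r. rewrite <- Hcomul.
  crewrite (fmap_comp3_eq S Eeta). rewrite fmap_comp. assoc_r.
  crewrite (fmap_comp_eq S (eta_nat _ S _ _ (tb S A A))). rewrite fmap_comp. assoc_r.
  crewrite (mu_T_eta _ S (acar (tens S A A))).
  crewrite (fmap_comp_eq S (eta_nat _ S _ _ (diag (acar A)))). rewrite fmap_comp. assoc_r.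
  crewrite (fmap_comp_eq S (eta_nat _ S _ _ (tb S A A))). rewrite fmap_comp. assoc_r.
  crewrite (fmap_comp_eq S (proj1 (act_law _ (tens S A A)))). rewrite fmap_id. assoc_r.
  reflexivity.
Qed.

Lemma u_b_coalg_hom : is_coalg_hom S A (unitA S) b (free_coalg S one) (u_b S A b).
Proof.
  pose proof Hb as [Hbh [_ Hcomul]]. split; [alg_hom |].
  unfold free_coalg, u_b. rewrite fmap_comp. assoc_r. rewrite <- Hcomul.
  crewrite (fmap_comp_eq S (eta_nat _ S _ _ (bang (acar A)))). rewrite fmap_comp. assoc_r.
  reflexivity.
Qed.

Lemma d_b_coassoc :
  alpha S A A A ∘ tmap S (A := A) (A' := tens S A A) (B := A) (B' := A)
                    (d_b S A b) (idm (acar A)) ∘ d_b S A b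
  = tmap S (A := A) (A' := A) (B := A) (B' := tens S A A) (idm (acar A)) (d_b S A b)
    ∘ d_b S A b.
Proof.
  pose proof Hb as [Hbh _].
  assert (El : pmap (tb S A A ∘ diag (acar A)) (idm (acar A)) ∘ diag (acar A)
               = pmap (tb S A A) (idm (acar A))
                 ∘ (pmap (diag (acar A)) (idm (acar A)) ∘ diag (acar A)))
    by (prod_simpl; reflexivity).
  assert (Er : pmap (idm (acar A)) (tb S A A ∘ diag (acar A)) ∘ diag (acar A)
               = pmap (idm (acar A)) (tb S A A)
                 ∘ (pmap (idm (acar A)) (diag (acar A)) ∘ diag (acar A)))
    by (prod_simpl; reflexivity).
  rewrite !d_b_basis_ext. assoc_r.
  rewrite (alg_hom_basis_ext b (tmap S (B' := A) _ (idm (acar A)))) by alg_hom.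
  rewrite (alg_hom_basis_ext b (tmap S (A' := A) (idm (acar A)) _)) by alg_hom.
  rewrite !tmap_tb_r by alg_hom.
  rewrite (basis_ext_nested_l S A b Hb), (basis_ext_nested_r S A b Hb).
  rewrite (alg_hom_basis_ext b (alpha S A A A)) by alg_hom.
  f_equal. rewrite El, Er.
  pose proof (alpha_tb _ S A A A) as Halpha. repeat rewrite <- comp_assoc in Halpha.
  assoc_r. crewrite Halpha. rewrite assocr_diag. reflexivity.
Qed.

Lemma d_b_counit_l :
  lam S A ∘ tmap S (A := A) (A' := unitA S) (B := A) (B' := A) (u_b S A b) (idm (acar A))
    ∘ d_b S A b = idm (acar A).
Proof.
  pose proof Hb as [Hbh [Hab _]].
  assert (E : pmap (eta S one ∘ bang (acar A)) (idm (acar A)) ∘ diag (acar A)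
              = pmap (eta S one) (idm (acar A))
                ∘ (pmap (bang (acar A)) (idm (acar A)) ∘ diag (acar A)))
    by (prod_simpl; reflexivity).
  rewrite d_b_basis_ext, u_b_basis_ext. assoc_r.
  rewrite (alg_hom_basis_ext b (tmap S (B' := A) _ (idm (acar A)))) by alg_hom.
  rewrite tmap_tb_r by alg_hom.
  rewrite (basis_ext_nested_l S A b Hb), (alg_hom_basis_ext b (lam S A)) by alg_hom.
  transitivity (basis_ext b (idm (acar A))); [f_equal | exact (basis_ext_id b Hab)].
  cbn [unitA free acar act]. rewrite E.
  crewrite (lam_tb_lscale S A). crewrite (lscale_eta A). prod_simpl. reflexivity.
Qed.

Lemma d_b_counit_r :
  rho S A ∘ tmap S (A := A) (A' := A) (B := A) (B' := unitA S) (idm (acar A)) (u_b S A b)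
    ∘ d_b S A b = idm (acar A).
Proof.
  pose proof Hb as [Hbh [Hab _]].
  assert (E : pmap (idm (acar A)) (eta S one ∘ bang (acar A)) ∘ diag (acar A)
              = pmap (idm (acar A)) (eta S one)
                ∘ (pmap (idm (acar A)) (bang (acar A)) ∘ diag (acar A)))
    by (prod_simpl; reflexivity).
  rewrite d_b_basis_ext, u_b_basis_ext. assoc_r.
  rewrite (alg_hom_basis_ext b (tmap S (A' := A) (idm (acar A)) _)) by alg_hom.
  rewrite tmap_tb_r by alg_hom.
  rewrite (basis_ext_nested_r S A b Hb), (alg_hom_basis_ext b (rho S A)) by alg_hom.
  transitivity (basis_ext b (idm (acar A))); [f_equal | exact (basis_ext_id b Hab)].
  cbn [unitA free acar act]. rewrite E.
  crewrite (rho_tb_rscale S A). crewrite (rscale_eta A). prod_simpl. reflexivity.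
Qed.

End Comonoid.

Section CoalgebraHomomorphisms.
Context {C : CartCat} (S : Setting C).

Lemma coalg_hom_comp {A B D : Alg S} {bA : hom (acar A) (T S (acar A))}
    {bB : hom (acar B) (T S (acar B))} {bD : hom (acar D) (T S (acar D))}
    (f : hom (acar A) (acar B)) (g : hom (acar B) (acar D)) :
  is_coalg_hom S A B bA bB f -> is_coalg_hom S B D bB bD g -> is_coalg_hom S A D bA bD (g ∘ f).
Proof.
  intros [Hf1 Hf2] [Hg1 Hg2]. split; [alg_hom |].
  assoc_r. crewrite Hg2. crewrite Hf2. rewrite fmap_comp. assoc_r. reflexivity.
Qed.

Lemma d_b_nat {Z B : Alg S} (c : hom (acar Z) (T S (acar Z))) (b : hom (acar B) (T S (acar B)))
    (h : hom (acar Z) (acar B)) :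
  is_coalg_hom S Z B c b h -> d_b S B b ∘ h = tmap S h h ∘ d_b S Z c.
Proof.
  intros [Hh1 Hh2]. rewrite !d_b_basis_ext.
  rewrite (alg_hom_basis_ext c (tmap S h h)) by alg_hom.
  rewrite tmap_tb_r by assumption. rewrite pmap_diag.
  unfold basis_ext. assoc_r. crewrite Hh2. rewrite !fmap_comp. assoc_r. reflexivity.
Qed.

Lemma u_b_nat {Z B : Alg S} (c : hom (acar Z) (T S (acar Z))) (b : hom (acar B) (T S (acar B)))
    (h : hom (acar Z) (acar B)) :
  is_coalg_hom S Z B c b h ->
  @comp C _ _ (acar (unitA S)) (u_b S B b) h = u_b S Z c.
Proof.
  intros [_ Hh]. unfold u_b. assoc_r. crewrite Hh.
  crewrite (fmap_comp_eq S (bang_comp h)). reflexivity.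
Qed.

Lemma tmap_coalg_hom {A1 B1 A2 B2 : Alg S}
    (b1 : hom (acar A1) (T S (acar A1))) (c1 : hom (acar B1) (T S (acar B1)))
    (b2 : hom (acar A2) (T S (acar A2))) (c2 : hom (acar B2) (T S (acar B2)))
    (g1 : hom (acar A1) (acar B1)) (g2 : hom (acar A2) (acar B2)) :
  is_alg_hom A1 (free S (acar A1)) b1 -> is_alg_hom A2 (free S (acar A2)) b2 ->
  is_alg_hom B1 (free S (acar B1)) c1 -> is_alg_hom B2 (free S (acar B2)) c2 ->
  is_coalg_hom S A1 B1 b1 c1 g1 -> is_coalg_hom S A2 B2 b2 c2 g2 ->
  is_coalg_hom S (tens S A1 A2) (tens S B1 B2)
    (tens_coalg S A1 A2 b1 b2) (tens_coalg S B1 B2 c1 c2) (tmap S g1 g2).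
Proof.
  intros Hb1 Hb2 Hc1 Hc2 [Hg1 Eg1] [Hg2 Eg2]. split; [alg_hom |].
  apply (tens_hom_eq S A1 A2 (free S (acar (tens S B1 B2)))); try alg_hom.
  assoc_r. crewrite (tmap_tb S g1 g2 Hg1 Hg2).
  crewrite (tens_coalg_tb S B1 B2 c1 c2 Hc1 Hc2). crewrite (tens_coalg_tb S A1 A2 b1 b2 Hb1 Hb2).
  rewrite pmap_comp, Eg1, Eg2, <- pmap_comp. crewrite (dstL_nat S g1 g2).
  crewrite (fmap_comp_eq S (tmap_tb S g1 g2 Hg1 Hg2)). rewrite fmap_comp. assoc_r.
  reflexivity.
Qed.

Lemma coalg_hom_inv {P P' : Alg S} {bP : hom (acar P) (T S (acar P))}
    {bP' : hom (acar P') (T S (acar P'))}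
    (phi : hom (acar P) (acar P')) (psi : hom (acar P') (acar P)) :
  is_coalg_hom S P P' bP bP' phi -> psi ∘ phi = idm _ -> phi ∘ psi = idm _ ->
  is_coalg_hom S P' P bP' bP psi.
Proof.
  intros [Hphi Ephi] I1 I2. split; [exact (alg_hom_inv S phi psi Hphi I1 I2) |].
  transitivity (fmap S psi ∘ (fmap S phi ∘ (bP ∘ psi))).
  - crewrite (fmap_comp_eq S I1). rewrite fmap_id. assoc_r. reflexivity.
  - crewrite (eq_sym Ephi). crewrite I2. reflexivity.
Qed.

Lemma coalg_product_iso {A1 A2 P P' : Alg S}
    {b1 : hom (acar A1) (T S (acar A1))} {b2 : hom (acar A2) (T S (acar A2))}
    {bP : hom (acar P) (T S (acar P))} {bP' : hom (acar P') (T S (acar P'))}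
    (q1 : hom (acar P) (acar A1)) (q2 : hom (acar P) (acar A2))
    (q1' : hom (acar P') (acar A1)) (q2' : hom (acar P') (acar A2))
    (phi : hom (acar P) (acar P')) (psi : hom (acar P') (acar P)) :
  coalg_product S A1 A2 P b1 b2 bP q1 q2 ->
  is_coalg_hom S P P' bP bP' phi -> psi ∘ phi = idm _ -> phi ∘ psi = idm _ ->
  q1' ∘ phi = q1 -> q2' ∘ phi = q2 ->
  coalg_product S A1 A2 P' b1 b2 bP' q1' q2'.
Proof.
  intros [Hq1 [Hq2 U]] Hphi I1 I2 E1 E2.
  pose proof (coalg_hom_inv phi psi Hphi I1 I2) as Hpsi.
  assert (F1 : q1' = q1 ∘ psi) by (rewrite <- E1, <- comp_assoc, I2, comp_idr; reflexivity).
  assert (F2 : q2' = q2 ∘ psi) by (rewrite <- E2, <- comp_assoc, I2, comp_idr; reflexivity).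
  split; [rewrite F1; exact (coalg_hom_comp psi q1 Hpsi Hq1) |].
  split; [rewrite F2; exact (coalg_hom_comp psi q2 Hpsi Hq2) |].
  intros Z c Hc f1 f2 Hf1 Hf2. destruct (U Z c Hc f1 f2 Hf1 Hf2) as [h [[Hh [G1 G2]] Uh]].
  exists (phi ∘ h). split.
  - split; [exact (coalg_hom_comp h phi Hh Hphi) |].
    split; rewrite comp_assoc; [rewrite E1 | rewrite E2]; assumption.
  - intros h' [Hh' [K1 K2]].
    assert (H : psi ∘ h' = h).
    { apply Uh. split; [exact (coalg_hom_comp h' psi Hh' Hpsi) |].
      split; rewrite comp_assoc; [rewrite <- F1 | rewrite <- F2]; assumption. }
    rewrite <- H, comp_assoc, I2, comp_idl. reflexivity.
Qed.

End CoalgebraHomomorphisms.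

Definition tens_proj1 {C : CartCat} (S : Setting C) (A1 A2 : Alg S)
    (b2 : hom (acar A2) (T S (acar A2))) : hom (acar (tens S A1 A2)) (acar A1) :=
  rho S A1 ∘ tmap S (B' := unitA S) (idm (acar A1)) (u_b S A2 b2).

Definition tens_proj2 {C : CartCat} (S : Setting C) (A1 A2 : Alg S)
    (b1 : hom (acar A1) (T S (acar A1))) : hom (acar (tens S A1 A2)) (acar A2) :=
  lam S A2 ∘ tmap S (A' := unitA S) (u_b S A1 b1) (idm (acar A2)).

Lemma tens_proj1_alg_hom {C : CartCat} (S : Setting C) (A1 A2 : Alg S)
    (b2 : hom (acar A2) (T S (acar A2))) :
  is_alg_hom A2 (free S (acar A2)) b2 -> is_alg_hom (tens S A1 A2) A1 (tens_proj1 S A1 A2 b2).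
Proof. intros H. unfold tens_proj1. alg_hom. Qed.

Lemma tens_proj2_alg_hom {C : CartCat} (S : Setting C) (A1 A2 : Alg S)
    (b1 : hom (acar A1) (T S (acar A1))) :
  is_alg_hom A1 (free S (acar A1)) b1 -> is_alg_hom (tens S A1 A2) A2 (tens_proj2 S A1 A2 b1).
Proof. intros H. unfold tens_proj2. alg_hom. Qed.

#[local] Hint Resolve tens_proj1_alg_hom tens_proj2_alg_hom : alg_hom.

Section TensorProduct.
Context {C : CartCat} (S : Setting C) (A1 A2 : Alg S)
  (b1 : hom (acar A1) (T S (acar A1))) (b2 : hom (acar A2) (T S (acar A2))).
Hypotheses (H1 : is_coalg S A1 b1) (H2 : is_coalg S A2 b2).

Lemma dstL_pmap_comul :
  fmap S (pmap b1 b2) ∘ (dstL S (acar A1) (acar A2) ∘ pmap b1 b2)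
  = fmap S (pmap (eta S (acar A1)) (eta S (acar A2)))
    ∘ (dstL S (acar A1) (acar A2) ∘ pmap b1 b2).
Proof.
  destruct H1 as [_ [_ Hcomul1]], H2 as [_ [_ Hcomul2]].
  crewrite (eq_sym (dstL_nat S b1 b2)). rewrite pmap_comp, <- Hcomul1, <- Hcomul2, <- pmap_comp.
  crewrite (dstL_nat S (eta S (acar A1)) (eta S (acar A2))). reflexivity.
Qed.

Lemma fmap_tens_coalg_tb {Y : C} (g : hom (acar (tens S A1 A2)) Y)
    (G : hom (T S (acar A1) × T S (acar A2)) Y) :
  g ∘ tb S A1 A2 = G ∘ pmap b1 b2 ->
  fmap S g ∘ (tens_coalg S A1 A2 b1 b2 ∘ tb S A1 A2)
  = fmap S (G ∘ pmap (eta S (acar A1)) (eta S (acar A2)))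
    ∘ (dstL S (acar A1) (acar A2) ∘ pmap b1 b2).
Proof.
  intros Hg. rewrite (tens_coalg_tb S A1 A2 b1 b2 (proj1 H1) (proj1 H2)).
  crewrite (fmap_comp_eq S Hg). rewrite !fmap_comp. assoc_r.
  crewrite dstL_pmap_comul. reflexivity.
Qed.

Lemma tens_coalg_is_coalg : is_coalg S (tens S A1 A2) (tens_coalg S A1 A2 b1 b2).
Proof.
  pose proof H1 as [Hb1 [Hab1 _]]. pose proof H2 as [Hb2 [Hab2 _]].
  assert (Htc := tens_coalg_tb S A1 A2 b1 b2 Hb1 Hb2).
  split; [apply tens_coalg_alg_hom; assumption | split].
  - apply (tens_hom_eq S A1 A2 (tens S A1 A2)); try alg_hom.
    assoc_r. crewrite Htc.
    crewrite (bihom_dstL S A1 A2 (tens S A1 A2) (tb S A1 A2) (tb_bihom _ S A1 A2)).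
    rewrite pmap_comp, Hab1, Hab2. prod_simpl. reflexivity.
  - apply (tens_hom_eq S A1 A2 (free S (T S (acar (tens S A1 A2))))); try alg_hom.
    set (G := fmap S (tb S A1 A2) ∘ dstL S (acar A1) (acar A2)).
    assert (HG : tens_coalg S A1 A2 b1 b2 ∘ tb S A1 A2 = G ∘ pmap b1 b2)
      by (rewrite Htc; unfold G; assoc_r; reflexivity).
    assert (HGeta : G ∘ pmap (eta S (acar A1)) (eta S (acar A2)) = eta S _ ∘ tb S A1 A2).
    { unfold G. assoc_r. crewrite (dstL_eta S (acar A1) (acar A2)). apply eta_nat. }
    assoc_r. rewrite (fmap_tens_coalg_tb _ _ HG), HGeta, HG, fmap_comp. unfold G.
    assoc_r. reflexivity.
Qed.

Lemma tens_proj1_tb :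
  tens_proj1 S A1 A2 b2 ∘ tb S A1 A2
  = (rscale A1 ∘ pmap (act A1) (fmap S (bang (acar A2)))) ∘ pmap b1 b2.
Proof.
  destruct H1 as [_ [Hab1 _]], H2 as [Hb2 _]. unfold tens_proj1. assoc_r.
  rewrite (tmap_tb S (A' := A1) (B' := unitA S)) by alg_hom.
  crewrite (rho_tb_rscale S A1). unfold u_b. prod_simpl.
  repeat crewrite Hab1. reflexivity.
Qed.

Lemma tens_proj2_tb :
  tens_proj2 S A1 A2 b1 ∘ tb S A1 A2
  = (lscale A2 ∘ pmap (fmap S (bang (acar A1))) (act A2)) ∘ pmap b1 b2.
Proof.
  destruct H1 as [Hb1 _], H2 as [_ [Hab2 _]]. unfold tens_proj2. assoc_r.
  rewrite (tmap_tb S (A' := unitA S) (B' := A2)) by alg_hom.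
  crewrite (lam_tb_lscale S A2). unfold u_b. prod_simpl.
  repeat crewrite Hab2. reflexivity.
Qed.

Lemma tens_proj1_coalg_hom :
  is_coalg_hom S (tens S A1 A2) A1 (tens_coalg S A1 A2 b1 b2) b1 (tens_proj1 S A1 A2 b2).
Proof.
  pose proof H1 as [Hb1 [Hab1 _]]. pose proof H2 as [Hb2 _].
  split; [alg_hom |].
  apply (tens_hom_eq S A1 A2 (free S (acar A1))); try alg_hom.
  assert (E : pmap b1 (idm (T S one)) ∘ (pmap (act A1) (fmap S (bang (acar A2))) ∘ pmap b1 b2)
              = pmap (idm (T S (acar A1))) (fmap S (bang (acar A2))) ∘ pmap b1 b2)
    by (prod_simpl; crewrite Hab1; reflexivity).
  assert (Efst : fst (T S (acar A1)) one ∘ pmap (idm (T S (acar A1))) (bang (acar A2))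
                 = fst (T S (acar A1)) (acar A2))
    by (prod_simpl; reflexivity).
  assoc_r. rewrite (fmap_tens_coalg_tb _ _ tens_proj1_tb).
  rewrite rscale_pmap_eta, tens_proj1_tb.
  crewrite (fmap_fst_dstL S (acar A1) (acar A2)).
  unfold rscale. assoc_r. crewrite Hb1.
  assert (Eb1 : b1 ∘ fst (acar A1) one = fst (T S (acar A1)) one ∘ pmap b1 (idm one))
    by (prod_simpl; reflexivity).
  crewrite (fmap_comp_eq S Eb1). rewrite fmap_comp. assoc_r.
  crewrite (eq_sym (st_nat_l S (B := one) b1)). crewrite E.
  crewrite (st_nat _ S _ _ _ _ (idm (T S (acar A1))) (bang (acar A2))).
  crewrite (fmap_comp_eq S Efst). reflexivity.
Qed.

Lemma tens_proj2_coalg_hom :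
  is_coalg_hom S (tens S A1 A2) A2 (tens_coalg S A1 A2 b1 b2) b2 (tens_proj2 S A1 A2 b1).
Proof.
  pose proof H1 as [Hb1 _]. pose proof H2 as [Hb2 [Hab2 _]].
  split; [alg_hom |].
  apply (tens_hom_eq S A1 A2 (free S (acar A2))); try alg_hom.
  assert (E : pmap (idm (T S one)) b2 ∘ (pmap (fmap S (bang (acar A1))) (act A2) ∘ pmap b1 b2)
              = pmap (fmap S (bang (acar A1))) (idm (T S (acar A2))) ∘ pmap b1 b2)
    by (prod_simpl; crewrite Hab2; reflexivity).
  assert (Esnd : snd one (T S (acar A2)) ∘ pmap (bang (acar A1)) (idm (T S (acar A2)))
                 = snd (acar A1) (T S (acar A2)))
    by (prod_simpl; reflexivity).
  assoc_r. rewrite (fmap_tens_coalg_tb _ _ tens_proj2_tb).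
  rewrite lscale_pmap_eta, tens_proj2_tb.
  rewrite (M_comm _ S (acar A1) (acar A2)).
  crewrite (fmap_snd_dstR S (acar A1) (acar A2)).
  unfold lscale. assoc_r. crewrite Hb2.
  assert (Eb2 : b2 ∘ snd one (acar A2) = snd one (T S (acar A2)) ∘ pmap (idm one) b2)
    by (prod_simpl; reflexivity).
  crewrite (fmap_comp_eq S Eb2). rewrite fmap_comp. assoc_r.
  pose proof (cst_nat S (idm one) b2) as Hcst. rewrite fmap_id in Hcst.
  crewrite (eq_sym Hcst). crewrite E.
  crewrite (cst_nat S (bang (acar A1)) (idm (T S (acar A2)))).
  crewrite (fmap_comp_eq S Esnd). reflexivity.
Qed.

Lemma tmap_tens_proj_d_b :
  tmap S (tens_proj1 S A1 A2 b2) (tens_proj2 S A1 A2 b1)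
    ∘ d_b S (tens S A1 A2) (tens_coalg S A1 A2 b1 b2) = idm _.
Proof.
  pose proof H1 as [Hb1 [Hab1 _]]. pose proof H2 as [Hb2 [Hab2 _]].
  set (G := tb S A1 A2 ∘ pair (rscale A1 ∘ pmap (act A1) (fmap S (bang (acar A2))))
                               (lscale A2 ∘ pmap (fmap S (bang (acar A1))) (act A2))).
  assert (HG : tmap S (tens_proj1 S A1 A2 b2) (tens_proj2 S A1 A2 b1)
                 ∘ (tb S (tens S A1 A2) (tens S A1 A2) ∘ diag _) ∘ tb S A1 A2
               = G ∘ pmap b1 b2).
  { assoc_r. rewrite tmap_tb_r by alg_hom.
    prod_simpl.
    rewrite tens_proj1_tb, tens_proj2_tb.
    unfold G. prod_simpl. reflexivity. }
  assert (HGeta : G ∘ pmap (eta S (acar A1)) (eta S (acar A2)) = tb S A1 A2).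
  { unfold G. rewrite <- comp_assoc, pair_comp, rscale_pmap_eta, lscale_pmap_eta.
    rewrite pair_fst_snd. apply comp_idr. }
  apply (tens_hom_eq S A1 A2 (tens S A1 A2)); try alg_hom.
  rewrite d_b_basis_ext, (alg_hom_basis_ext _ (tmap S _ _)) by alg_hom.
  unfold basis_ext. assoc_r.
  rewrite (fmap_tens_coalg_tb _ _ HG), HGeta.
  crewrite (bihom_dstL S A1 A2 (tens S A1 A2) (tb S A1 A2) (tb_bihom _ S A1 A2)).
  rewrite pmap_comp, Hab1, Hab2. prod_simpl. reflexivity.
Qed.

Section Pairing.
Context {Z : Alg S} (c : hom (acar Z) (T S (acar Z))) (f1 : hom (acar Z) (acar A1))
  (f2 : hom (acar Z) (acar A2)).
Hypotheses (Hc : is_coalg S Z c)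
  (Hf1 : is_coalg_hom S Z A1 c b1 f1) (Hf2 : is_coalg_hom S Z A2 c b2 f2).

Lemma tens_proj1_pairing : tens_proj1 S A1 A2 b2 ∘ (tmap S f1 f2 ∘ d_b S Z c) = f1.
Proof.
  pose proof Hc as [Hch _]. pose proof H2 as [Hb2 _].
  destruct Hf1 as [Hf1h _]. pose proof Hf2 as [Hf2h _].
  unfold tens_proj1. assoc_r.
  rewrite (comp_eq_pre2 (tmap_comp S (B'' := unitA S) f1 f2 _ _ Hf1h Hf2h
                           (alg_hom_id S A1) (u_b_alg_hom S A2 b2 Hb2))).
  rewrite comp_idl, (u_b_nat S c b2 f2 Hf2).
  assert (Esplit : tmap S (A' := A1) (B := Z) (B' := unitA S) f1 (u_b S Z c)
                   = tmap S (B := unitA S) (B' := unitA S) f1 (idm _)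
                     ∘ tmap S (A' := Z) (B := Z) (B' := unitA S) (idm _) (u_b S Z c))
    by (rewrite tmap_comp by alg_hom; rewrite comp_idl, comp_idr; reflexivity).
  rewrite Esplit. assoc_r.
  crewrite (rho_nat _ S Z A1 f1 Hf1h).
  pose proof (d_b_counit_r S Z c Hc) as Hcounit. rewrite <- comp_assoc in Hcounit.
  unfold unitA in Hcounit |- *.
  crewrite Hcounit. reflexivity.
Qed.

Lemma tens_proj2_pairing : tens_proj2 S A1 A2 b1 ∘ (tmap S f1 f2 ∘ d_b S Z c) = f2.
Proof.
  pose proof Hc as [Hch _]. pose proof H1 as [Hb1 _].
  pose proof Hf1 as [Hf1h _]. destruct Hf2 as [Hf2h _].
  unfold tens_proj2. assoc_r.
  rewrite (comp_eq_pre2 (tmap_comp S (A'' := unitA S) f1 f2 _ _ Hf1h Hf2h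
                           (u_b_alg_hom S A1 b1 Hb1) (alg_hom_id S A2))).
  rewrite comp_idl, (u_b_nat S c b1 f1 Hf1).
  assert (Esplit : tmap S (A := Z) (A' := unitA S) (B' := A2) (u_b S Z c) f2
                   = tmap S (A := unitA S) (A' := unitA S) (idm _) f2
                     ∘ tmap S (A := Z) (A' := unitA S) (B' := Z) (u_b S Z c) (idm _))
    by (rewrite tmap_comp by alg_hom; rewrite comp_idl, comp_idr; reflexivity).
  rewrite Esplit. assoc_r.
  crewrite (lam_nat _ S Z A2 f2 Hf2h).
  pose proof (d_b_counit_l S Z c Hc) as Hcounit. rewrite <- comp_assoc in Hcounit.
  unfold unitA in Hcounit |- *.
  crewrite Hcounit. reflexivity.
Qed.

End Pairing.

Lemma tens_coalg_product :
  coalg_product S A1 A2 (tens S A1 A2) b1 b2 (tens_coalg S A1 A2 b1 b2)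
    (tens_proj1 S A1 A2 b2) (tens_proj2 S A1 A2 b1).
Proof.
  pose proof H1 as [Hb1 _]. pose proof H2 as [Hb2 _].
  split; [apply tens_proj1_coalg_hom |].
  split; [apply tens_proj2_coalg_hom |].
  intros Z c Hc f1 f2 Hf1 Hf2. pose proof Hc as [Hch _].
  exists (tmap S f1 f2 ∘ d_b S Z c). split; [split; [| split] |].
  - apply (coalg_hom_comp S (B := tens S Z Z) (bB := tens_coalg S Z Z c c)).
    + apply d_b_coalg_hom, Hc.
    + apply tmap_coalg_hom; assumption.
  - eapply tens_proj1_pairing; eassumption.
  - eapply tens_proj2_pairing; eassumption.
  - intros h [Hh [E1 E2]]. pose proof Hh as [Hhh _].
    rewrite <- (comp_idl _ _ _ h), <- tmap_tens_proj_d_b. assoc_r.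
    rewrite (d_b_nat S c (tens_coalg S A1 A2 b1 b2) h Hh), comp_assoc.
    rewrite tmap_comp by alg_hom. rewrite E1, E2. reflexivity.
Qed.

End TensorProduct.

Section FreeCoalgebras.
Context {C : CartCat} (S : Setting C).

Lemma free_coalg_is_coalg (Y : C) : is_coalg S (free S Y) (free_coalg S Y).
Proof.
  unfold is_coalg, free_coalg. simpl. split; [| split].
  - apply mu_nat.
  - apply mu_T_eta.
  - rewrite <- !fmap_comp, (eta_nat _ S _ _ (eta S Y)). reflexivity.
Qed.

Lemma fmap_coalg_hom (Y Y' : C) (f : hom Y Y') :
  is_coalg_hom S (free S Y) (free S Y') (free_coalg S Y) (free_coalg S Y') (fmap S f).
Proof.
  split; [alg_hom |]. unfold free_coalg. simpl.
  rewrite <- !fmap_comp, (eta_nat _ S _ _ f). reflexivity.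
Qed.

(* Uniqueness: [T(!) ∘ T(eta_1) = id] recovers [h] from [T(eta_1) ∘ h = T(h) ∘ c]. *)
Lemma unit_coalg_terminal : coalg_terminal S (unitA S) (free_coalg S one).
Proof.
  intros Z c Hc. exists (u_b S Z c). split; [apply u_b_coalg_hom, Hc |].
  intros h [_ Hh]. unfold free_coalg, unitA in *. simpl in *.
  assert (E : bang (T S one) ∘ eta S one = idm one)
    by (rewrite bang_comp; symmetry; apply bang_uniq).
  transitivity (fmap S (bang (T S one)) ∘ (fmap S (eta S one) ∘ h)).
  - crewrite (fmap_comp_eq S E). rewrite fmap_id. assoc_r. reflexivity.
  - rewrite Hh. assoc_r. crewrite (fmap_comp_eq S (bang_comp h)). reflexivity.
Qed.

Lemma xi_coalg_hom (Y1 Y2 : C) :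
  is_coalg_hom S (tens S (free S Y1) (free S Y2)) (free S (Y1 × Y2))
    (tens_coalg S (free S Y1) (free S Y2) (free_coalg S Y1) (free_coalg S Y2))
    (free_coalg S (Y1 × Y2)) (xi S Y1 Y2).
Proof.
  split; [alg_hom |].
  unfold free_coalg, tens_coalg. assoc_r. simpl acar.
  crewrite (fmap_comp_eq S (xi_tb _ S Y1 Y2)).
  crewrite (xi_nat _ S Y1 (T S Y1) Y2 (T S Y2) (eta S Y1) (eta S Y2)).
  crewrite (fmap_comp_eq S (dstL_eta S Y1 Y2)). reflexivity.
Qed.

(* The product of free coalgebras is the tensor product, transported along [xi]. *)
Lemma free_coalg_product (Y1 Y2 : C) :
  coalg_product S (free S Y1) (free S Y2) (free S (Y1 × Y2))
    (free_coalg S Y1) (free_coalg S Y2) (free_coalg S (Y1 × Y2))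
    (fmap S (fst Y1 Y2)) (fmap S (snd Y1 Y2)).
Proof.
  destruct (xi_iso _ S Y1 Y2) as [I1 I2].
  apply (coalg_product_iso S (P := tens S (free S Y1) (free S Y2)) (P' := free S (Y1 × Y2))
           _ _ _ _ (xi S Y1 Y2) (xi_inv S Y1 Y2)
           (tens_coalg_product S _ _ _ _ (free_coalg_is_coalg Y1) (free_coalg_is_coalg Y2))
           (xi_coalg_hom Y1 Y2) I2 I1).
  - unfold tens_proj1, u_b, free_coalg, unitA. simpl acar.
    assert (Efst : fst Y1 Y2 = fst Y1 one ∘ pmap (idm Y1) (bang Y2)) by (prod_simpl; reflexivity).
    pose proof (xi_nat _ S Y1 Y1 Y2 one (idm Y1) (bang Y2)) as Hxi. rewrite fmap_id in Hxi.
    rewrite Efst, fmap_comp. assoc_r. crewrite (eq_sym Hxi). crewrite (xi_runit _ S Y1).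
    rewrite (fmap_comp_eq S (bang_comp (eta S Y2))). reflexivity.
  - unfold tens_proj2, u_b, free_coalg, unitA. simpl acar.
    assert (Esnd : snd Y1 Y2 = snd one Y2 ∘ pmap (bang Y1) (idm Y2)) by (prod_simpl; reflexivity).
    pose proof (xi_nat _ S Y1 one Y2 Y2 (bang Y1) (idm Y2)) as Hxi. rewrite fmap_id in Hxi.
    rewrite Esnd, fmap_comp. assoc_r. crewrite (eq_sym Hxi). crewrite (xi_lunit _ S Y2).
    rewrite (fmap_comp_eq S (bang_comp (eta S Y1))). reflexivity.
Qed.

End FreeCoalgebras.

Theorem proposition6p6 :
  forall (C : CartCat) (S : Setting C),
  (* d_b and u_b are Tbar-coalgebra homomorphisms and form a comonoid *)
  (forall (A : Alg S) (b : hom (acar A) (T S (acar A))),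
     is_coalg S A b ->
     is_coalg_hom S A (tens S A A) b (tens_coalg S A A b b) (d_b S A b) /\
     is_coalg_hom S A (unitA S) b (free_coalg S one) (u_b S A b) /\
     alpha S A A A
       ∘ tmap S (A := A) (A' := tens S A A) (B := A) (B' := A)
           (d_b S A b) (idm (acar A))
       ∘ d_b S A b
     = tmap S (A := A) (A' := A) (B := A) (B' := tens S A A)
           (idm (acar A)) (d_b S A b)
       ∘ d_b S A b /\
     lam S A
       ∘ tmap S (A := A) (A' := unitA S) (B := A) (B' := A)
           (u_b S A b) (idm (acar A))
       ∘ d_b S A b = idm (acar A) /\
     rho S A
       ∘ tmap S (A := A) (A' := A) (B := A) (B' := unitA S)
           (idm (acar A)) (u_b S A b)
       ∘ d_b S A b = idm (acar A)) /\
  (* final object of CoAlg(Tbar): T(1) with coalgebra T(eta_1) *)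
  is_coalg S (unitA S) (free_coalg S one) /\
  coalg_terminal S (unitA S) (free_coalg S one) /\
  (* binary products in CoAlg(Tbar): the tensor of carrier algebras *)
  (forall (A1 A2 : Alg S) (b1 : hom (acar A1) (T S (acar A1)))
          (b2 : hom (acar A2) (T S (acar A2))),
     is_coalg S A1 b1 -> is_coalg S A2 b2 ->
     is_coalg S (tens S A1 A2) (tens_coalg S A1 A2 b1 b2) /\
     coalg_product S A1 A2 (tens S A1 A2) b1 b2 (tens_coalg S A1 A2 b1 b2)
       (rho S A1 ∘ tmap S (A := A1) (A' := A1) (B := A2) (B' := unitA S)
                      (idm (acar A1)) (u_b S A2 b2))
       (lam S A2 ∘ tmap S (A := A1) (A' := unitA S) (B := A2) (B' := A2)
                      (u_b S A1 b1) (idm (acar A2)))) /\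
  (* the functor Y |-> (T Y, mu_Y, T(eta_Y)) into CoAlg(Tbar) ... *)
  (forall Y : C, is_coalg S (free S Y) (free_coalg S Y)) /\
  (forall (Y Y' : C) (f : hom Y Y'),
     is_coalg_hom S (free S Y) (free S Y') (free_coalg S Y) (free_coalg S Y') (fmap S f)) /\
  (* ... preserves finite products *)
  coalg_terminal S (free S one) (free_coalg S one) /\
  (forall Y1 Y2 : C,
     coalg_product S (free S Y1) (free S Y2) (free S (Y1 × Y2))
       (free_coalg S Y1) (free_coalg S Y2) (free_coalg S (Y1 × Y2))
       (fmap S (fst Y1 Y2)) (fmap S (snd Y1 Y2))).
Proof.
  intros C S.
  split; [| split; [| split; [| split; [| split; [| split; [| split]]]]]].
  - intros A b Hb.
    split; [exact (d_b_coalg_hom S A b Hb) |].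
    split; [exact (u_b_coalg_hom S A b Hb) |].
    split; [exact (d_b_coassoc S A b Hb) |].
    split; [exact (d_b_counit_l S A b Hb) | exact (d_b_counit_r S A b Hb)].
  - apply free_coalg_is_coalg.
  - apply unit_coalg_terminal.
  - intros A1 A2 b1 b2 H1 H2.
    split; [exact (tens_coalg_is_coalg S A1 A2 b1 b2 H1 H2) |].
    exact (tens_coalg_product S A1 A2 b1 b2 H1 H2).
  - apply free_coalg_is_coalg.
  - apply fmap_coalg_hom.
  - apply unit_coalg_terminal.
  - apply free_coalg_product.
Qed.
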